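(* In the model described in the context, the expected fidelity of the end-to-end entangled link delivered in a successful round is $$F_{\mathrm{e2e}}=\frac{1+3\,\mathbb E(w_{\mathrm{e2e}})}{4},\qquad \mathbb E(w_{\mathrm{e2e}})=\frac{w_{\mathrm m}^2\,w_{\mathrm b}\,e^{-k t_{\mathrm{msg}}}}{p}\,U_1(k),\qquad k=\frac{2}{t_{\mathrm{coh}}},$$ where $U_1(v):=\mathbb E\big(e^{-vX_{\mathrm{diff}}}\mathbf 1_{Y=1}\big)$ with $X_{\mathrm{diff}}=X_{\max}-X_{\min}$ on $A_1^+\cup A_2^+$ and $X_{\mathrm{diff}}=2X_b-X_1-X_2$ on $A_b^+$. Moreover, for every $v$, $$U_1(v)=2\Big(\mathbb E\big(e^{-v(X_1-X_2)}\mathbf 1_{A_{12}^+}\big)+\mathbb E\big(e^{-v(X_1-X_b)}\mathbf 1_{A_{1b}^+}\big)-\mathbb E\big(e^{-v(X_1-X_2)}\mathbf 1_{A_{12}^+A_{1b}^+}\big)\Big)+\mathbb E\big(e^{-v(2X_b-X_1-X_2)}\mathbf 1_{A_b^+}\big)$$ $$\qquad-\mathbb E\big(e^{-v(X_1-X_b)}\mathbf 1_{A_1^+A_2^+}\big)-2\,\mathbb E\big(e^{-v(X_1-X_2)}\mathbf 1_{A_1^+A_b^+}\big)+\mathbb E\big(\mathbf 1_{A_1^+A_2^+A_b^+}\big).$$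
   Context: Random model: integers $t_{\mathrm m},t_{\mathrm b}\ge1$, $t_{\mathrm{msg}}\ge0$, $t_{\mathrm{cut}}>\max\{t_{\mathrm m},t_{\mathrm b},t_{\mathrm{msg}}\}$; $p_{\mathrm m},p_{\mathrm b}\in(0,1)$; $M_1,M_2,M_b$ independent with $\mathbb P(M_1=j)=\mathbb P(M_2=j)=p_{\mathrm m}(1-p_{\mathrm m})^{j-1}$, $\mathbb P(M_b=j)=p_{\mathrm b}(1-p_{\mathrm b})^{j-1}$, $j\ge1$; $X_1=t_{\mathrm m}M_1$, $X_2=t_{\mathrm m}M_2$, $X_b=t_{\mathrm b}M_b$ are the generation times (within a round) of elementary link 1 (end node–border node, metropolitan network 1), link 2 (end node–border node, metropolitan network 2) and link b (between the two border nodes, backbone); $X_{\max},X_{\min}$ their max and min; $Y=1$ iff $X_{\max}-X_{\min}<t_{\mathrm{cut}}$ (successful round), $p=\mathbb P(Y=1)$. Events: for $i,j\in\{1,2,b\}$, $A_i^+=\{X_{\max}=X_i,\ X_{\max}-X_{\min}<t_{\mathrm{cut}}\}$, $A_{ij}^+=\{X_{\max}=X_i,\ X_{\min}=X_j,\ X_{\max}-X_{\min}<t_{\mathrm{cut}}\}$; juxtaposition denotes intersection. Physical model: every link is a two-qubit Werner state $w|\Phi^+\rangle\langle\Phi^+|+(1-w)\mathbb I_4/4$, $|\Phi^+\rangle=(|00\rangle+|11\rangle)/\sqrt2$, with fidelity $(1+3w)/4$; freshly generated metropolitan links (1 and 2) have Werner parameter $w_{\mathrm m}$ and the fresh backbone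 link has $w_{\mathrm b}$. Each stored qubit undergoes the depolarising channel $\rho\mapsto e^{-t/t_{\mathrm{coh}}}\rho+(1-e^{-t/t_{\mathrm{coh}}})\mathbb I_2/2$ over storage time $t$, so a Werner link both of whose qubits are stored for time $t$ has its parameter multiplied by $e^{-2t/t_{\mathrm{coh}}}$. Each border node performs a noiseless entanglement swap as soon as it holds both adjacent links (swap-as-soon-as-possible), and swapping Werner states with parameters $w,w'$ yields a Werner state with parameter $ww'$. After the final swap the end-to-end link is stored for a further time $t_{\mathrm{msg}}$ (classical notification to the end nodes). $w_{\mathrm{e2e}}$ denotes the Werner parameter of the resulting end-to-end link in a successful round (conditioned on $Y=1$) and $F_{\mathrm{e2e}}$ its expected fidelity. *)

From Stdlib Require Import Reals Lra Lia Arith Bool.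
From Coquelicot Require Import Coquelicot.
Open Scope R_scope.

Inductive link := L1 | L2 | Lb.

Definition geom (q : R) (j : nat) : R :=
  match j with
  | O => 0
  | S i => q * (1 - q) ^ i
  end.

Definition ExM (pm pb : R) (f : nat -> nat -> nat -> R) : R :=
  Series (fun a => Series (fun b => Series (fun c =>
    geom pm a * geom pm b * geom pb c * f a b c))).

(** Expectation of a function g(X1, X2, Xb) of the generation times
    X1 = tm M1, X2 = tm M2, Xb = tb Mb. *)
Definition EX (pm pb : R) (tm tb : nat) (g : nat -> nat -> nat -> R) : R :=
  ExM pm pb (fun a b c => g (tm * a)%nat (tm * b)%nat (tb * c)%nat).

Definition Xof (x1 x2 xb : nat) (i : link) : nat :=
  match i with L1 => x1 | L2 => x2 | Lb => xb end.

Definition Xmax (x1 x2 xb : nat) : nat := Nat.max x1 (Nat.max x2 xb).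
Definition Xmin (x1 x2 xb : nat) : nat := Nat.min x1 (Nat.min x2 xb).

Definition Ysucc (tcut x1 x2 xb : nat) : bool :=
  Nat.ltb (Xmax x1 x2 xb - Xmin x1 x2 xb) tcut.

Definition Ap (tcut : nat) (i : link) (x1 x2 xb : nat) : bool :=
  Nat.eqb (Xmax x1 x2 xb) (Xof x1 x2 xb i) && Ysucc tcut x1 x2 xb.

Definition Aij (tcut : nat) (i j : link) (x1 x2 xb : nat) : bool :=
  Nat.eqb (Xmax x1 x2 xb) (Xof x1 x2 xb i)
  && Nat.eqb (Xmin x1 x2 xb) (Xof x1 x2 xb j) && Ysucc tcut x1 x2 xb.

Definition indic (b : bool) : R := if b then 1 else 0.

Definition psucc (pm pb : R) (tm tb tcut : nat) : R :=
  EX pm pb tm tb (fun x1 x2 xb => indic (Ysucc tcut x1 x2 xb)).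

Definition CondE (pm pb : R) (tm tb tcut : nat) (g : nat -> nat -> nat -> R) : R :=
  EX pm pb tm tb (fun x1 x2 xb => indic (Ysucc tcut x1 x2 xb) * g x1 x2 xb)
  / psucc pm pb tm tb tcut.

Definition Xdiff (tcut x1 x2 xb : nat) : R :=
  if Ap tcut L1 x1 x2 xb || Ap tcut L2 x1 x2 xb
  then INR (Xmax x1 x2 xb) - INR (Xmin x1 x2 xb)
  else 2 * INR xb - INR x1 - INR x2.

Definition U1 (pm pb : R) (tm tb tcut : nat) (v : R) : R :=
  EX pm pb tm tb (fun x1 x2 xb =>
    exp (- v * Xdiff tcut x1 x2 xb) * indic (Ysucc tcut x1 x2 xb)).

(** Storage of a Werner link (both qubits) for time t: w |-> w e^{-2t/tcoh}. *)
Definition store (tcoh : R) (t : nat) (w : R) : R := w * exp (- 2 * INR t / tcoh).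

Definition swapW (w w' : R) : R := w * w'.

(** Werner parameter of the end-to-end link produced in a round with generation
    times x1, x2, xb under swap-asap: border node A (links 1, b) swaps at
    tA = max(X1, Xb), border node B (links b, 2) swaps at tB = max(X2, Xb);
    every existing link is stored (both qubits) until it is consumed by a swap;
    the final end-to-end link is stored for a further tmsg. *)
Definition w_e2e (wm wb tcoh : R) (tmsg x1 x2 xb : nat) : R :=
  let tA := Nat.max x1 xb in
  let tB := Nat.max x2 xb in
  let wfin :=
    if Nat.leb tA tB then
      (* swap at A first, resulting link (end 1 -- B) stored until tB *)
      swapW (store tcoh (tB - tA) (swapW (store tcoh (tA - x1) wm)
                                         (store tcoh (tA - xb) wb)))
            (store tcoh (tB - x2) wm)
    else
      (* swap at B first, resulting link (A -- end 2) stored until tA *)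
      swapW (store tcoh (tA - x1) wm)
            (store tcoh (tA - tB) (swapW (store tcoh (tB - xb) wb)
                                         (store tcoh (tB - x2) wm)))
  in store tcoh tmsg wfin.

Definition fidW (w : R) : R := (1 + 3 * w) / 4.

Definition Ew_e2e (pm pb wm wb tcoh : R) (tm tb tmsg tcut : nat) : R :=
  CondE pm pb tm tb tcut (fun x1 x2 xb => w_e2e wm wb tcoh tmsg x1 x2 xb).

Definition F_e2e (pm pb wm wb tcoh : R) (tm tb tmsg tcut : nat) : R :=
  CondE pm pb tm tb tcut (fun x1 x2 xb => fidW (w_e2e wm wb tcoh tmsg x1 x2 xb)).

(* On a successful round the end-to-end Werner parameter is
   [wm^2 wb e^{-k tmsg} e^{-k Xdiff}]: every stored link decays by [e^{-k}] per
   unit of storage time, and under swap-asap the storage times of all links add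
   up to [Xdiff] (whichever border node swaps first).  The fidelity is affine in
   the Werner parameter, so it commutes with the conditional expectation.  The
   expansion of [U1] is inclusion-exclusion over [{Y = 1} = A1+ ∪ A2+ ∪ Ab+]
   with [A1+ = A12+ ∪ A1b+]; the exchange
   symmetry of the i.i.d. pair [(M1, M2)] turns the [A2+] terms into [A1+] terms.
   Expectations are triple series against geometric weights, so the analytic
   content is linearity and one exchange of summation order (Fubini), both valid
   for bounded integrands; all integrands here are supported on [{Y = 1}], where
   every gap between generation times is below [tcut]. *)

From Stdlib Require Import Reals Lra Lia Arith Bool.
From Coquelicot Require Import Coquelicot.
Open Scope R_scope.

Section WeightedSum.

Variable w : nat -> R.
Hypothesis w_ge0 : forall n, 0 <= w n.
Hypothesis w_summable : ex_series w.

Definition wsum (h : nat -> R) : R := Series (fun n => w n * h n).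

Lemma Rabs_weighted_le h B n : Rabs (h n) <= B -> Rabs (w n * h n) <= B * w n.
Proof.
  intros Hh. rewrite Rabs_mult, (Rabs_pos_eq (w n)) by auto.
  rewrite Rmult_comm. apply Rmult_le_compat_r; auto.
Qed.

Lemma ex_series_weighted_abs h B : (forall n, Rabs (h n) <= B) ->
  ex_series (fun n => Rabs (w n * h n)).
Proof.
  intros Hh. apply (@ex_series_le R_AbsRing R_CompleteNormedModule _ (fun n => B * w n)).
  - intros n. change (Rabs (Rabs (w n * h n)) <= B * w n).
    rewrite Rabs_Rabsolu. apply Rabs_weighted_le; auto.
  - exact (ex_series_scal_l B w w_summable).
Qed.

Lemma ex_series_weighted h B : (forall n, Rabs (h n) <= B) ->
  ex_series (fun n => w n * h n).
Proof. intros Hh. apply ex_series_Rabs. eapply ex_series_weighted_abs; eauto. Qed.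

Lemma wsum_bound h B : (forall n, Rabs (h n) <= B) -> Rabs (wsum h) <= B * Series w.
Proof.
  intros Hh. unfold wsum.
  eapply Rle_trans; [apply Series_Rabs; eapply ex_series_weighted_abs; eauto|].
  rewrite <- Series_scal_l. apply Series_le; [|exact (ex_series_scal_l B w w_summable)].
  intros n. split; [apply Rabs_pos | apply Rabs_weighted_le; auto].
Qed.

Lemma wsum_ext h g : (forall n, h n = g n) -> wsum h = wsum g.
Proof. intros E. unfold wsum. apply Series_ext. intros n. rewrite E. reflexivity. Qed.

Lemma wsum_scal c h : wsum (fun n => c * h n) = c * wsum h.
Proof. unfold wsum. rewrite <- Series_scal_l. apply Series_ext. intros n. ring. Qed.

Lemma wsum_plus h g Bh Bg : (forall n, Rabs (h n) <= Bh) -> (forall n, Rabs (g n) <= Bg) ->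
  wsum (fun n => h n + g n) = wsum h + wsum g.
Proof.
  intros Hh Hg. unfold wsum.
  rewrite <- Series_plus by (eapply ex_series_weighted; eauto).
  apply Series_ext. intros n. ring.
Qed.

Lemma wsum_minus h g Bh Bg : (forall n, Rabs (h n) <= Bh) -> (forall n, Rabs (g n) <= Bg) ->
  wsum (fun n => h n - g n) = wsum h - wsum g.
Proof.
  intros Hh Hg. unfold wsum.
  rewrite <- Series_minus by (eapply ex_series_weighted; eauto).
  apply Series_ext. intros n. ring.
Qed.

Lemma partial_sum_le_wsum h B n : (forall n, Rabs (h n) <= B) -> (forall n, 0 <= h n) ->
  sum_f_R0 (fun k => w k * h k) n <= wsum h.
Proof.
  intros Hh Hpos. apply sum_incr.
  - apply is_series_Reals, Series_correct. eapply ex_series_weighted; eauto.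
  - intros k. apply Rmult_le_pos; auto.
Qed.

Lemma wsum_ge0 h B : (forall n, Rabs (h n) <= B) -> (forall n, 0 <= h n) -> 0 <= wsum h.
Proof.
  intros Hh Hpos. eapply Rle_trans; [|apply (partial_sum_le_wsum h B 0); auto].
  apply cond_pos_sum. intros k. apply Rmult_le_pos; auto.
Qed.

Lemma wsum_gt0 h B n : (forall n, Rabs (h n) <= B) -> (forall n, 0 <= h n) ->
  0 < w n * h n -> 0 < wsum h.
Proof.
  intros Hh Hpos Hn. eapply Rlt_le_trans; [|apply (partial_sum_le_wsum h B n); auto].
  destruct n as [|n]; simpl; auto.
  assert (0 <= sum_f_R0 (fun k => w k * h k) n)
    by (apply cond_pos_sum; intros; apply Rmult_le_pos; auto).
  lra.
Qed.

End WeightedSum.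

Lemma wsum_tail w h B n : (forall n, 0 <= w n) -> ex_series w -> (forall n, Rabs (h n) <= B) ->
  Rabs (wsum w h - sum_f_R0 (fun k => w k * h k) n) <= B * (Series w - sum_f_R0 w n).
Proof.
  intros Hw Hsum Hh. unfold wsum.
  rewrite (Series_incr_n _ (S n)) by (lia || eapply ex_series_weighted; eauto).
  rewrite (Series_incr_n w (S n)) by (lia || auto). simpl pred.
  match goal with |- Rabs (?s + ?t - ?s) <= B * (?s' + ?t' - ?s') =>
    replace (s + t - s) with t by ring; replace (s' + t' - s') with t' by ring end.
  apply (wsum_bound (fun k => w (S n + k)%nat)); auto.
  apply (ex_series_incr_n w (S n)); auto.
Qed.

Section Fubini.

Variables w w' : nat -> R.
Hypotheses (w_ge0 : forall n, 0 <= w n) (w'_ge0 : forall n, 0 <= w' n).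
Hypotheses (w_summable : ex_series w) (w'_summable : ex_series w').
Variables (H : nat -> nat -> R) (B : R).
Hypothesis H_bounded : forall a b, Rabs (H a b) <= B.

Lemma partial_wsum_bound n b : Rabs (sum_f_R0 (fun a => w a * H a b) n) <= B * sum_f_R0 w n.
Proof.
  induction n as [|n IH]; simpl.
  - apply (Rabs_weighted_le w w_ge0 (fun a => H a b)); auto.
  - eapply Rle_trans; [apply Rabs_triang|].
    rewrite Rmult_plus_distr_l. apply Rplus_le_compat; auto.
    apply (Rabs_weighted_le w w_ge0 (fun a => H a b)); auto.
Qed.

Lemma partial_wsum_comm n :
  sum_f_R0 (fun a => w a * wsum w' (H a)) n
  = wsum w' (fun b => sum_f_R0 (fun a => w a * H a b) n).
Proof.
  induction n as [|n IH]; simpl.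
  - rewrite wsum_scal. reflexivity.
  - rewrite IH, (wsum_plus w' w'_ge0 w'_summable _ _ (B * sum_f_R0 w n) (B * w (S n))).
    + rewrite wsum_scal. reflexivity.
    + apply partial_wsum_bound.
    + intros b. apply (Rabs_weighted_le w w_ge0 (fun a => H a b)); auto.
Qed.

(* The partial sums of the outer series commute with the inner one, and the
   remainder is bounded, uniformly in [b], by [B] times the tail of [w]. *)
Lemma wsum_comm :
  wsum w (fun a => wsum w' (H a)) = wsum w' (fun b => wsum w (fun a => H a b)).
Proof.
  assert (HB : 0 <= B) by (eapply Rle_trans; [apply Rabs_pos | apply (H_bounded 0%nat 0%nat)]).
  assert (HS' : 0 <= Series w').
  { apply (Rle_trans _ (sum_f_R0 w' 0)); [apply cond_pos_sum; auto |].
    apply sum_incr; auto. apply is_series_Reals, Series_correct; auto. }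
  set (C := B * Series w' + 1).
  apply is_series_unique, is_series_Reals. intros eps Heps.
  destruct (proj1 (is_series_Reals _ _) (Series_correct _ w_summable) (eps / C))
    as [N HN]; [unfold C; apply Rdiv_lt_0_compat; nra|].
  exists N. intros n Hn. specialize (HN n Hn). unfold R_dist in *.
  rewrite partial_wsum_comm.
  rewrite <- (wsum_minus w' w'_ge0 w'_summable _ _ (B * sum_f_R0 w n) (B * Series w)).
  3: { intros b. apply (wsum_bound w w_ge0 w_summable (fun a => H a b)); auto. }
  2: { intros b. apply partial_wsum_bound. }
  eapply Rle_lt_trans.
  { apply (wsum_bound w' w'_ge0 w'_summable _ (B * (Series w - sum_f_R0 w n))).
    intros b. rewrite Rabs_minus_sym. apply (wsum_tail w (fun a => H a b)); auto. }
  assert (Htail : Series w - sum_f_R0 w n < eps / C).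
  { rewrite Rabs_minus_sym in HN. eapply Rle_lt_trans; [apply Rle_abs | exact HN]. }
  assert (HBS : 0 <= B * Series w') by (apply Rmult_le_pos; auto).
  assert (HepsC : eps = eps / C * C) by (field; unfold C; lra).
  assert (0 < eps / C) by (unfold C; apply Rdiv_lt_0_compat; lra).
  assert (B * Series w' * (Series w - sum_f_R0 w n) <= B * Series w' * (eps / C))
    by (apply Rmult_le_compat_l; lra).
  set (e := eps / C) in *. unfold C in HepsC. nra.
Qed.

End Fubini.

Lemma geom_ge0 q : 0 < q < 1 -> forall n, 0 <= geom q n.
Proof.
  intros Hq n. destruct n as [|n]; simpl; [lra|].
  apply Rmult_le_pos; [lra | apply pow_le; lra].
Qed.

Lemma is_series_geom_pmf q : 0 < q < 1 -> is_series (geom q) 1.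
Proof.
  intros Hq. apply is_series_decr_1.
  assert (Hratio : Rabs (1 - q) < 1) by (rewrite Rabs_pos_eq; lra).
  pose proof (is_series_scal_l q _ _ (is_series_geom (1 - q) Hratio)) as Hgeo.
  change (is_series (fun k => q * (1 - q) ^ k) (1 + - 0)).
  replace (1 + - 0) with (q * / (1 - (1 - q))) by (field; lra).
  exact Hgeo.
Qed.

Lemma ex_series_geom_pmf q : 0 < q < 1 -> ex_series (geom q).
Proof. intros Hq. eexists. apply is_series_geom_pmf; auto. Qed.

Lemma wsum_geom_bound q h B : 0 < q < 1 -> (forall n, Rabs (h n) <= B) ->
  Rabs (wsum (geom q) h) <= B.
Proof.
  intros Hq Hh. rewrite <- (Rmult_1_r B), <- (is_series_unique _ _ (is_series_geom_pmf q Hq)).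
  apply wsum_bound; auto using geom_ge0, ex_series_geom_pmf.
Qed.

Definition bounded3 (f : nat -> nat -> nat -> R) : Prop :=
  exists B, forall x y z, Rabs (f x y z) <= B.

Lemma bounded3_scal c f : bounded3 f -> bounded3 (fun x y z => c * f x y z).
Proof.
  intros [B HB]. exists (Rabs c * B). intros x y z. rewrite Rabs_mult.
  apply Rmult_le_compat_l; [apply Rabs_pos | apply HB].
Qed.

Lemma bounded3_plus f g : bounded3 f -> bounded3 g -> bounded3 (fun x y z => f x y z + g x y z).
Proof.
  intros [Bf Hf] [Bg Hg]. exists (Bf + Bg). intros x y z.
  eapply Rle_trans; [apply Rabs_triang | apply Rplus_le_compat; auto].
Qed.

Lemma bounded3_minus f g : bounded3 f -> bounded3 g -> bounded3 (fun x y z => f x y z - g x y z).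
Proof.
  intros [Bf Hf] [Bg Hg]. exists (Bf + Bg). intros x y z.
  eapply Rle_trans; [apply Rabs_triang | rewrite Rabs_Ropp; apply Rplus_le_compat; auto].
Qed.

Lemma bounded3_indic A : bounded3 (fun x y z => indic (A x y z)).
Proof.
  exists 1. intros x y z. destruct (A x y z); simpl; rewrite ?Rabs_R1, ?Rabs_R0; lra.
Qed.

Lemma bounded3_swap12 f : bounded3 f -> bounded3 (fun x y z => f y x z).
Proof. intros [B HB]. exists B. intros x y z. apply HB. Qed.

Section Expectation.

Variables (pm pb : R) (tm tb : nat).
Hypotheses (Hpm : 0 < pm < 1) (Hpb : 0 < pb < 1).

Local Notation E := (EX pm pb tm tb).

Lemma EX_wsum f : E f =
  wsum (geom pm) (fun a => wsum (geom pm) (fun b =>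
    wsum (geom pb) (fun c => f (tm * a)%nat (tm * b)%nat (tb * c)%nat))).
Proof.
  unfold EX, ExM, wsum. apply Series_ext. intros a. rewrite <- Series_scal_l.
  apply Series_ext. intros b. rewrite <- !Series_scal_l.
  apply Series_ext. intros c. ring.
Qed.

Lemma EX_ext f g : (forall x y z, f x y z = g x y z) -> E f = E g.
Proof.
  intros Hfg. rewrite !EX_wsum.
  apply wsum_ext. intros a. apply wsum_ext. intros b. apply wsum_ext. intros c. apply Hfg.
Qed.

Lemma EX_scal c f : E (fun x y z => c * f x y z) = c * E f.
Proof.
  rewrite !EX_wsum, <- wsum_scal. apply wsum_ext. intros a.
  rewrite <- wsum_scal. apply wsum_ext. intros b. apply wsum_scal.
Qed.

Ltac geom_bound := intros; repeat (apply wsum_geom_bound; auto; intros).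

Lemma EX_plus f g : bounded3 f -> bounded3 g ->
  E (fun x y z => f x y z + g x y z) = E f + E g.
Proof.
  intros [Bf Hf] [Bg Hg]. rewrite !EX_wsum.
  rewrite <- (wsum_plus _ (geom_ge0 pm Hpm) (ex_series_geom_pmf pm Hpm) _ _ Bf Bg)
    by geom_bound.
  apply wsum_ext. intros a.
  rewrite <- (wsum_plus _ (geom_ge0 pm Hpm) (ex_series_geom_pmf pm Hpm) _ _ Bf Bg)
    by geom_bound.
  apply wsum_ext. intros b.
  apply (wsum_plus _ (geom_ge0 pb Hpb) (ex_series_geom_pmf pb Hpb) _ _ Bf Bg); auto.
Qed.

Lemma EX_minus f g : bounded3 f -> bounded3 g ->
  E (fun x y z => f x y z - g x y z) = E f - E g.
Proof.
  intros Hf Hg.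
  rewrite (EX_ext _ (fun x y z => f x y z + -1 * g x y z)) by (intros; ring).
  rewrite EX_plus, EX_scal; auto using bounded3_scal. ring.
Qed.

Lemma EX_swap12 f : bounded3 f -> E (fun x y z => f y x z) = E f.
Proof.
  intros [B HB]. rewrite !EX_wsum.
  apply (wsum_comm _ _ (geom_ge0 pm Hpm) (geom_ge0 pm Hpm)
    (ex_series_geom_pmf pm Hpm) (ex_series_geom_pmf pm Hpm) _ B).
  intros a b. apply wsum_geom_bound; auto.
Qed.

Lemma EX_gt0 f : bounded3 f -> (forall x y z, 0 <= f x y z) -> 0 < f tm tm tb -> 0 < E f.
Proof.
  intros [B HB] Hf Hf1. rewrite EX_wsum.
  set (inner a b := wsum (geom pb) (fun c => f (tm * a)%nat (tm * b)%nat (tb * c)%nat)).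
  set (middle a := wsum (geom pm) (inner a)).
  assert (Hinner_bd : forall a b, Rabs (inner a b) <= B) by geom_bound.
  assert (Hmiddle_bd : forall a, Rabs (middle a) <= B) by geom_bound.
  assert (Hinner_ge0 : forall a b, 0 <= inner a b).
  { intros a b. apply (wsum_ge0 _ (geom_ge0 pb Hpb) (ex_series_geom_pmf pb Hpb) _ B); auto. }
  assert (Hmiddle_ge0 : forall a, 0 <= middle a).
  { intros a. apply (wsum_ge0 _ (geom_ge0 pm Hpm) (ex_series_geom_pmf pm Hpm) _ B); auto. }
  apply (wsum_gt0 _ (geom_ge0 pm Hpm) (ex_series_geom_pmf pm Hpm) middle B 1%nat); auto.
  apply Rmult_lt_0_compat; [simpl; lra|].
  apply (wsum_gt0 _ (geom_ge0 pm Hpm) (ex_series_geom_pmf pm Hpm) (inner 1%nat) B 1%nat); auto.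
  apply Rmult_lt_0_compat; [simpl; lra|].
  apply (wsum_gt0 _ (geom_ge0 pb Hpb) (ex_series_geom_pmf pb Hpb) _ B 1%nat); auto.
  apply Rmult_lt_0_compat; [simpl; lra|]. rewrite !Nat.mul_1_r. exact Hf1.
Qed.

End Expectation.

Lemma psucc_gt0 pm pb tm tb tcut : 0 < pm < 1 -> 0 < pb < 1 ->
  (Nat.max tm tb < tcut)%nat -> 0 < psucc pm pb tm tb tcut.
Proof.
  intros Hpm Hpb Hcut. apply EX_gt0; auto.
  - apply bounded3_indic.
  - intros x y z. destruct (Ysucc tcut x y z); simpl; lra.
  - replace (Ysucc tcut tm tm tb) with true; [simpl; lra|].
    symmetry. apply Nat.ltb_lt. unfold Xmax, Xmin. lia.
Qed.

Lemma CondE_fidW pm pb tm tb tcut g : 0 < pm < 1 -> 0 < pb < 1 ->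
  psucc pm pb tm tb tcut <> 0 ->
  bounded3 (fun x y z => indic (Ysucc tcut x y z) * g x y z) ->
  CondE pm pb tm tb tcut (fun x y z => fidW (g x y z)) = fidW (CondE pm pb tm tb tcut g).
Proof.
  intros Hpm Hpb Hp Hg. unfold CondE, fidW.
  rewrite (EX_ext _ _ _ _ _ (fun x y z => / 4 * indic (Ysucc tcut x y z)
    + 3 / 4 * (indic (Ysucc tcut x y z) * g x y z))) by (intros; field).
  rewrite EX_plus, !EX_scal; auto using bounded3_scal, bounded3_indic.
  fold (psucc pm pb tm tb tcut). field. exact Hp.
Qed.

Definition expind (v : R) (d : nat -> nat -> nat -> R) (A : nat -> nat -> nat -> bool)
  (x1 x2 xb : nat) : R := exp (- v * d x1 x2 xb) * indic (A x1 x2 xb).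

Definition gap (i j : link) (x1 x2 xb : nat) : R := INR (Xof x1 x2 xb i) - INR (Xof x1 x2 xb j).

Definition Xdiff_b (x1 x2 xb : nat) : R := 2 * INR xb - INR x1 - INR x2.

Definition inter (A B : nat -> nat -> nat -> bool) (x1 x2 xb : nat) : bool :=
  A x1 x2 xb && B x1 x2 xb.

Definition implies_success (tcut : nat) (A : nat -> nat -> nat -> bool) : Prop :=
  forall x1 x2 xb, A x1 x2 xb = true -> Ysucc tcut x1 x2 xb = true.

Lemma implies_success_Ap tcut i : implies_success tcut (Ap tcut i).
Proof. intros x1 x2 xb. unfold Ap. rewrite andb_true_iff. tauto. Qed.

Lemma implies_success_Aij tcut i j : implies_success tcut (Aij tcut i j).
Proof. intros x1 x2 xb. unfold Aij. rewrite !andb_true_iff. tauto. Qed.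

Lemma implies_success_inter tcut A B : implies_success tcut A -> implies_success tcut (inter A B).
Proof. intros HA x1 x2 xb. unfold inter. rewrite andb_true_iff. intros [H _]. auto. Qed.

Lemma Xof_between x1 x2 xb i : (Xmin x1 x2 xb <= Xof x1 x2 xb i <= Xmax x1 x2 xb)%nat.
Proof. unfold Xmin, Xmax. destruct i; simpl; lia. Qed.

Lemma success_gap_bound tcut x1 x2 xb i j : Ysucc tcut x1 x2 xb = true ->
  Rabs (gap i j x1 x2 xb) <= INR tcut.
Proof.
  unfold Ysucc, gap. intros Hs%Nat.ltb_lt.
  pose proof (Xof_between x1 x2 xb i). pose proof (Xof_between x1 x2 xb j).
  assert (INR (Xof x1 x2 xb i) <= INR (Xof x1 x2 xb j) + INR tcut)
    by (rewrite <- plus_INR; apply le_INR; lia).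
  assert (INR (Xof x1 x2 xb j) <= INR (Xof x1 x2 xb i) + INR tcut)
    by (rewrite <- plus_INR; apply le_INR; lia).
  apply Rabs_le. lra.
Qed.

Lemma success_Xdiff_b_bound tcut x1 x2 xb : Ysucc tcut x1 x2 xb = true ->
  Rabs (Xdiff_b x1 x2 xb) <= 2 * INR tcut.
Proof.
  intros Hs. replace (Xdiff_b x1 x2 xb) with (gap Lb L1 x1 x2 xb + gap Lb L2 x1 x2 xb)
    by (unfold Xdiff_b, gap; simpl; ring).
  eapply Rle_trans; [apply Rabs_triang|].
  pose proof (success_gap_bound tcut x1 x2 xb Lb L1 Hs).
  pose proof (success_gap_bound tcut x1 x2 xb Lb L2 Hs). lra.
Qed.

Lemma success_Xdiff_bound tcut x1 x2 xb : Ysucc tcut x1 x2 xb = true ->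
  Rabs (Xdiff tcut x1 x2 xb) <= 2 * INR tcut.
Proof.
  intros Hs. unfold Xdiff. destruct (_ || _).
  - pose proof Hs as Hlt. unfold Ysucc in Hlt. apply Nat.ltb_lt in Hlt.
    pose proof (Xof_between x1 x2 xb L1) as [Hmin Hmax].
    apply le_INR in Hmin, Hmax.
    assert (INR (Xmax x1 x2 xb) <= INR (Xmin x1 x2 xb) + INR tcut)
      by (rewrite <- plus_INR; apply le_INR; lia).
    pose proof (pos_INR tcut). apply Rabs_le. lra.
  - apply (success_Xdiff_b_bound tcut x1 x2 xb Hs).
Qed.

Lemma bounded3_expind v d A K : (forall x y z, A x y z = true -> Rabs (d x y z) <= K) ->
  bounded3 (expind v d A).
Proof.
  intros Hd. exists (exp (Rabs v * K)). intros x y z. unfold expind.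
  specialize (Hd x y z). destruct (A x y z); simpl.
  - rewrite Rmult_1_r, Rabs_pos_eq by (left; apply exp_pos).
    assert (Hle : - v * d x y z <= Rabs v * K).
    { eapply Rle_trans; [apply Rle_abs|]. rewrite Rabs_mult, Rabs_Ropp.
      apply Rmult_le_compat_l; [apply Rabs_pos | auto]. }
    destruct Hle as [Hlt | ->]; [left; apply exp_increasing; exact Hlt | right; reflexivity].
  - rewrite Rmult_0_r, Rabs_R0. left. apply exp_pos.
Qed.

Lemma bounded3_expind_gap v tcut i j A : implies_success tcut A ->
  bounded3 (expind v (gap i j) A).
Proof.
  intros HA. apply (bounded3_expind _ _ _ (INR tcut)).
  intros x y z Hxyz. apply success_gap_bound, HA, Hxyz.
Qed.

Lemma bounded3_expind_Xdiff_b v tcut A : implies_success tcut A ->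
  bounded3 (expind v Xdiff_b A).
Proof.
  intros HA. apply (bounded3_expind _ _ _ (2 * INR tcut)).
  intros x y z Hxyz. apply success_Xdiff_b_bound, HA, Hxyz.
Qed.

Lemma bounded3_U1_integrand v tcut : bounded3 (expind v (Xdiff tcut) (Ysucc tcut)).
Proof. apply (bounded3_expind _ _ _ (2 * INR tcut)). apply success_Xdiff_bound. Qed.

Lemma exp_neg_diff v a b : exp (- v * (a - b)) = exp (v * b) / exp (v * a).
Proof.
  replace (- v * (a - b)) with (v * b + - (v * a)) by ring.
  rewrite exp_plus, exp_Ropp. reflexivity.
Qed.

Lemma exp_neg_Xdiff_b v a b c :
  exp (- v * (2 * c - a - b)) = exp (v * a) * exp (v * b) / (exp (v * c) * exp (v * c)).
Proof.
  replace (- v * (2 * c - a - b)) with (v * a + v * b + - (v * c + v * c)) by ring.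
  rewrite !exp_plus, exp_Ropp, exp_plus. reflexivity.
Qed.

Lemma store_exp tcoh t w : store tcoh t w = w * exp (- (2 / tcoh) * INR t).
Proof. unfold store. do 2 f_equal. unfold Rdiv. ring. Qed.

Ltac case_order x1 x2 xb :=
  destruct (lt_eq_lt_dec x1 x2) as [[?|?]|?];
  destruct (lt_eq_lt_dec x1 xb) as [[?|?]|?];
  destruct (lt_eq_lt_dec x2 xb) as [[?|?]|?]; try (exfalso; lia); subst.

Ltac simpl_order :=
  repeat first
    [ rewrite Nat.max_l by lia | rewrite Nat.max_r by lia
    | rewrite Nat.min_l by lia | rewrite Nat.min_r by lia ];
  repeat match goal with
  | |- context [Nat.eqb ?a ?b] =>
      first [rewrite (Nat.eqb_refl a) | rewrite (proj2 (Nat.eqb_neq a b)) by lia]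
  | |- context [Nat.leb ?a ?b] =>
      first [rewrite (proj2 (Nat.leb_le a b)) by lia | rewrite (proj2 (Nat.leb_gt a b)) by lia]
  end;
  repeat match goal with |- context [Nat.ltb ?a ?b] => destruct (Nat.ltb a b) end;
  cbn [andb orb indic].

Ltac exp_field :=
  repeat rewrite exp_neg_Xdiff_b; repeat rewrite exp_neg_diff;
  field; repeat split; apply Rgt_not_eq, exp_pos.

Lemma indic_success_w_e2e wm wb tcoh tmsg tcut x1 x2 xb :
  indic (Ysucc tcut x1 x2 xb) * w_e2e wm wb tcoh tmsg x1 x2 xb =
  wm ^ 2 * wb * exp (- (2 / tcoh) * INR tmsg) *
    (exp (- (2 / tcoh) * Xdiff tcut x1 x2 xb) * indic (Ysucc tcut x1 x2 xb)).
Proof.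
  unfold w_e2e, swapW. cbv zeta. rewrite !store_exp.
  generalize (2 / tcoh) as k. intros k.
  unfold Xdiff, Ap, Ysucc, Xmax, Xmin, Xof.
  case_order x1 x2 xb; simpl_order; repeat rewrite minus_INR by lia; exp_field.
Qed.

(* The terms at [x2 x1 xb] are the [A2+] counterparts of the [A1+] terms. *)
Lemma U1_integrand_decomposition v tcut x1 x2 xb :
  expind v (Xdiff tcut) (Ysucc tcut) x1 x2 xb =
    expind v (gap L1 L2) (Aij tcut L1 L2) x1 x2 xb
  + expind v (gap L1 Lb) (Aij tcut L1 Lb) x1 x2 xb
  - expind v (gap L1 L2) (inter (Aij tcut L1 L2) (Aij tcut L1 Lb)) x1 x2 xb
  + expind v (gap L1 L2) (Aij tcut L1 L2) x2 x1 xb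
  + expind v (gap L1 Lb) (Aij tcut L1 Lb) x2 x1 xb
  - expind v (gap L1 L2) (inter (Aij tcut L1 L2) (Aij tcut L1 Lb)) x2 x1 xb
  + expind v Xdiff_b (Ap tcut Lb) x1 x2 xb
  - expind v (gap L1 Lb) (inter (Ap tcut L1) (Ap tcut L2)) x1 x2 xb
  - expind v (gap L1 L2) (inter (Ap tcut L1) (Ap tcut Lb)) x1 x2 xb
  - expind v (gap L1 L2) (inter (Ap tcut L1) (Ap tcut Lb)) x2 x1 xb
  + indic (inter (inter (Ap tcut L1) (Ap tcut L2)) (Ap tcut Lb) x1 x2 xb).
Proof.
  unfold expind, gap, Xdiff_b, inter, Xdiff, Aij, Ap, Ysucc, Xmax, Xmin, Xof.
  case_order x1 x2 xb; simpl_order; exp_field.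
Qed.

Lemma bounded3_success_w_e2e wm wb tcoh tmsg tcut :
  bounded3 (fun x y z => indic (Ysucc tcut x y z) * w_e2e wm wb tcoh tmsg x y z).
Proof.
  destruct (bounded3_scal (wm ^ 2 * wb * exp (- (2 / tcoh) * INR tmsg)) _
    (bounded3_U1_integrand (2 / tcoh) tcut)) as [B HB].
  exists B. intros x y z. rewrite indic_success_w_e2e. apply HB.
Qed.

Ltac solve_bounded3 :=
  repeat first
    [ apply bounded3_minus | apply bounded3_plus | apply bounded3_indic
    | eapply bounded3_expind_gap | eapply bounded3_expind_Xdiff_b
    | apply implies_success_Aij | apply implies_success_Ap | apply implies_success_inter
    | apply bounded3_swap12 ].

Theorem mainTheorem2
  (tm tb tmsg tcut : nat) (pm pb wm wb tcoh : R)
  (Htm : (1 <= tm)%nat) (Htb : (1 <= tb)%nat)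
  (Hcut : (Nat.max tm (Nat.max tb tmsg) < tcut)%nat)
  (Hpm : 0 < pm < 1) (Hpb : 0 < pb < 1) (Htcoh : 0 < tcoh) :
  let k := 2 / tcoh in
  let p := psucc pm pb tm tb tcut in
  let E := EX pm pb tm tb in
  F_e2e pm pb wm wb tcoh tm tb tmsg tcut
    = (1 + 3 * Ew_e2e pm pb wm wb tcoh tm tb tmsg tcut) / 4
  /\ Ew_e2e pm pb wm wb tcoh tm tb tmsg tcut
    = wm ^ 2 * wb * exp (- k * INR tmsg) / p * U1 pm pb tm tb tcut k
  /\ forall v : R,
    U1 pm pb tm tb tcut v =
      2 * ( E (fun x1 x2 xb => exp (- v * (INR x1 - INR x2)) * indic (Aij tcut L1 L2 x1 x2 xb))
          + E (fun x1 x2 xb => exp (- v * (INR x1 - INR xb)) * indic (Aij tcut L1 Lb x1 x2 xb))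
          - E (fun x1 x2 xb => exp (- v * (INR x1 - INR x2))
                 * indic (andb (Aij tcut L1 L2 x1 x2 xb) (Aij tcut L1 Lb x1 x2 xb))) )
      + E (fun x1 x2 xb => exp (- v * (2 * INR xb - INR x1 - INR x2)) * indic (Ap tcut Lb x1 x2 xb))
      - E (fun x1 x2 xb => exp (- v * (INR x1 - INR xb))
             * indic (andb (Ap tcut L1 x1 x2 xb) (Ap tcut L2 x1 x2 xb)))
      - 2 * E (fun x1 x2 xb => exp (- v * (INR x1 - INR x2))
             * indic (andb (Ap tcut L1 x1 x2 xb) (Ap tcut Lb x1 x2 xb)))
      + E (fun x1 x2 xb => indic (andb (andb (Ap tcut L1 x1 x2 xb) (Ap tcut L2 x1 x2 xb)) (Ap tcut Lb x1 x2 xb))).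
Proof.
  cbv zeta.
  assert (Hp : 0 < psucc pm pb tm tb tcut) by (apply psucc_gt0; auto; lia).
  split; [|split].
  - apply CondE_fidW; auto using bounded3_success_w_e2e. lra.
  - unfold Ew_e2e, CondE, U1.
    rewrite (EX_ext _ _ _ _ _ _ (indic_success_w_e2e wm wb tcoh tmsg tcut)), EX_scal.
    unfold Rdiv. ring.
  - intros v. unfold U1.
    rewrite (EX_ext _ _ _ _ _ _ (U1_integrand_decomposition v tcut)).
    repeat first
      [ rewrite (EX_minus _ _ _ _ Hpm Hpb) by solve_bounded3
      | rewrite (EX_plus _ _ _ _ Hpm Hpb) by solve_bounded3 ].
    rewrite (EX_swap12 _ _ _ _ Hpm Hpb (expind v (gap L1 L2) (Aij tcut L1 L2))),
      (EX_swap12 _ _ _ _ Hpm Hpb (expind v (gap L1 Lb) (Aij tcut L1 Lb))),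
      (EX_swap12 _ _ _ _ Hpm Hpb
         (expind v (gap L1 L2) (inter (Aij tcut L1 L2) (Aij tcut L1 Lb)))),
      (EX_swap12 _ _ _ _ Hpm Hpb (expind v (gap L1 L2) (inter (Ap tcut L1) (Ap tcut Lb))))
      by solve_bounded3.
    cbv beta iota delta [expind gap Xdiff_b inter Xof]. ring.
Qed.
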